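(* Let $X$ be a Fréchet space and let $(T(t))_{t\geqslant0}$ be an exponentially equicontinuous $C_0$-semigroup on $X$ with generator $(A,D(A))$. Then \[-\infty\leqslant \operatorname{s}(A)\leqslant\omega_0(T)<+\infty.\]
   Context: A Fréchet space is a complete metrizable locally convex space; $\operatorname{cs}(X)$ denotes its continuous seminorms, a fundamental system is a subset $\Gamma\subseteq\operatorname{cs}(X)$ generating the topology, and $L(X)$ is the space of continuous linear maps $X\to X$. A set of operators in $L(X)$ is equicontinuous if for every continuous seminorm $q$ there exist a continuous seminorm $p$ and $C\geqslant0$ with $q(Sx)\leqslant Cp(x)$ for all operators $S$ in the set and all $x\in X$. A $C_0$-semigroup is a family $(T(t))_{t\geqslant0}\subseteq L(X)$ with $T(0)=\mathrm{id}_X$, $T(t+s)=T(t)T(s)$ for all $t,s\geqslant0$, and $t\mapsto T(t)x$ continuous on $[0,\infty)$ for every $x\in X$. It is exponentially equicontinuous of order $\omega\in\mathbb{R}$ if $\{e^{-\omega t}T(t)\}_{t\geqslant0}$ is equicontinuous, and exponentially equicontinuous if this holds for some $\omega\in\mathbb{R}$. The growth bound $\omega_0(T)$ is the infimum of all $\omega\in\mathbb{R}$ such that $\{e^{-\omega t}T(t)\}_{t\geqslant0}$ is equicontinuous. The generator is $Ax=\lim_{t\searrow0}\frac{T(t)x-x}{t}$ on $D(A)=\{x\in X: \lim_{t\searrow0}\frac{T(t)x-x}{t}\text{ exists}\}$. Let $L(X)_0$ denote the set of $B\in L(X)$ for which there is $\mu\in\mathbb{C}\setminus\{0\}$ such that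 $\{(\mu B)^n\}_{n\in\mathbb{N}_0}$ is equicontinuous (equivalently, bounded in the topology of uniform convergence on bounded sets). For a linear operator $A\colon D(A)\to X$ with $D(A)\subseteq X$ a linear subspace, put $\delta_A=\{\infty\}$ if $D(A)=X$ and $A\in L(X)_0$, and $\delta_A=\varnothing$ otherwise. The resolvent set is $\rho(A)=\{\lambda\in\mathbb{C}: \lambda-A\colon D(A)\to X\text{ is bijective and }R(\lambda,A)=(\lambda-A)^{-1}\in L(X)_0\}\cup\delta_A$, the spectrum is $\sigma(A)=(\mathbb{C}\cup\{\infty\})\setminus\rho(A)$, and the spectral bound is $\operatorname{s}(A)=\sup\{\operatorname{Re}\lambda:\lambda\in\sigma(A)\cap\mathbb{C}\}$ (with $\sup\varnothing=-\infty$). *)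

From HB Require Import structures.
From mathcomp Require Import all_boot all_order all_algebra.
From mathcomp Require Import all_classical all_reals.
From mathcomp Require Import all_analysis.
From mathcomp Require Import complex.

Set Implicit Arguments.
Unset Strict Implicit.
Unset Printing Implicit Defensive.

Import Order.TTheory GRing.Theory Num.Theory.
Local Open Scope ring_scope.
Local Open Scope classical_set_scope.

Section FrechetDefs.
Variable R : realType.
Variable X : lmodType R[i].

Definition seminorm (q : X -> R) : Prop :=
  (forall x, 0 <= q x) /\
  (forall x y, q (x + y) <= q x + q y) /\
  (forall (a : R[i]) x, q (a *: x) = Normc.normc a * q x).

(* A Fréchet space: X together with a countable fundamental system of
   seminorms P 0, P 1, ... generating a Hausdorff (separated) locally
   convex topology in which every Cauchy sequence converges. *)
Definition frechet (P : nat -> X -> R) : Prop :=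
  (forall n, seminorm (P n)) /\
  (forall x, (forall n, P n x = 0) -> x = 0) /\
  (forall u : nat -> X,
     (forall n (e : R), 0 < e -> exists N, forall k l, (N <= k)%N -> (N <= l)%N ->
        P n (u k - u l) < e) ->
     exists y, forall n (e : R), 0 < e -> exists N, forall k, (N <= k)%N ->
        P n (u k - y) < e).

Variable P : nat -> X -> R.

(* continuous seminorms cs(X) for the topology generated by P *)
Definition cseminorm (q : X -> R) : Prop :=
  seminorm q /\
  exists (m : nat) (C : R), 0 <= C /\ forall x, q x <= C * \sum_(i < m) P i x.

Definition linear_op (S : X -> X) : Prop :=
  forall (a : R[i]) x y, S (a *: x + y) = a *: S x + S y.

Definition cont_op (S : X -> X) : Prop :=
  forall q, cseminorm q -> cseminorm (fun x => q (S x)).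

Definition LX (S : X -> X) : Prop := linear_op S /\ cont_op S.

Definition equicont (I : Type) (F : I -> X -> X) : Prop :=
  forall q, cseminorm q -> exists p, cseminorm p /\
    exists C : R, 0 <= C /\ forall i x, q (F i x) <= C * p x.

(* C_0-semigroups (T t only matters for t >= 0) *)
Definition C0_semigroup (T : R -> X -> X) : Prop :=
  (forall t, 0 <= t -> LX (T t)) /\
  (forall x, T 0 x = x) /\
  (forall t s, 0 <= t -> 0 <= s -> forall x, T (t + s) x = T t (T s x)) /\
  (forall x t, 0 <= t -> forall n (e : R), 0 < e -> exists d : R, 0 < d /\
     forall s, 0 <= s -> `|s - t| < d -> P n (T s x - T t x) < e).

Definition rescaled (T : R -> X -> X) (w : R) : {t : R | 0 <= t} -> X -> X :=
  fun t x => (expR (- w * sval t))%:C%C *: T (sval t) x.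

Definition exp_equicont_of_order (T : R -> X -> X) (w : R) : Prop :=
  equicont (rescaled T w).

Definition exp_equicont (T : R -> X -> X) : Prop :=
  exists w : R, exp_equicont_of_order T w.

Definition growth_bound (T : R -> X -> X) : \bar R :=
  ereal_inf [set w%:E | w in [set w | exp_equicont_of_order T w]].

Definition lim_right0 (f : R -> X) (y : X) : Prop :=
  forall n (e : R), 0 < e -> exists d : R, 0 < d /\
    forall t, 0 < t -> t < d -> P n (f t - y) < e.

Definition generator (T : R -> X -> X) (D : set X) (A : X -> X) : Prop :=
  (forall x, D x <-> exists y, lim_right0 (fun t => (t^-1)%:C%C *: (T t x - x)) y) /\
  (forall x, D x -> lim_right0 (fun t => (t^-1)%:C%C *: (T t x - x)) (A x)).

Definition LX0 (B : X -> X) : Prop :=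
  LX B /\ exists mu : R[i], mu != 0 /\
    equicont (fun n : nat => iter n (fun x => mu *: B x)).

Definition resolvent_C (D : set X) (A : X -> X) (lam : R[i]) : Prop :=
  (forall x y, D x -> D y -> lam *: x - A x = lam *: y - A y -> x = y) /\
  (forall y, exists x, D x /\ lam *: x - A x = y) /\
  exists Rl : X -> X,
    (forall y, D (Rl y) /\ lam *: Rl y - A (Rl y) = y) /\ LX0 Rl.

(* points of C (not infinity) in the spectrum *)
Definition spectrum_C (D : set X) (A : X -> X) : set R[i] :=
  [set lam | ~ resolvent_C D A lam].

(* spectral bound, in the extended reals (sup of empty set = -oo) *)
Definition spectral_bound (D : set X) (A : X -> X) : \bar R :=
  ereal_sup [set (complex.Re lam)%:E | lam in spectrum_C D A].

End FrechetDefs.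

(** Fix [ω] such that [T] is exponentially equicontinuous of order [ω] and
    let [Re λ > ω].  In every continuous seminorm [e^{-λt} T(t)] decays like
    [e^{-(Re λ - ω) t}], so the dyadic Riemann sums of
    [∫_0^k e^{-λt} T(t) y dt] form a Cauchy sequence whose limit [R y] exists
    by completeness.  [R] is continuous and commutes with [T]; differentiating
    [e^{-λt} T(t) R y] at [0⁺] gives [(λ - A) R y = y], and commutation gives
    [R (λ - A) x = x].  Finally [K⁻¹ R], with [K = e^a / a] and
    [a = Re λ - ω], does not increase any seminorm [v ↦ sup_t e^{-ωt} q(T(t) v)],
    so [R] lies in [L(X)_0].  Hence [λ] is in the resolvent set, which gives
    [s(A) ≤ ω] for every admissible [ω], i.e. [s(A) ≤ ω_0(T)]; and
    [ω_0(T) ≤ ω < +∞]. *)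

From HB Require Import structures.
From mathcomp Require Import all_boot all_order all_algebra.
From mathcomp Require Import all_classical all_reals.
From mathcomp Require Import all_analysis.
From mathcomp Require Import complex.
From mathcomp Require Import ring lra.

Set Implicit Arguments.
Unset Strict Implicit.
Unset Printing Implicit Defensive.

Import Order.TTheory GRing.Theory Num.Theory.
Local Open Scope ring_scope.
Local Open Scope classical_set_scope.

Lemma near_inftyP (Q : nat -> Prop) :
  (\forall k \near \oo, Q k) <-> exists N, forall k, (N <= k)%N -> Q k.
Proof. by split=> [[N _ HN]|[N HN]]; exists N. Qed.

Lemma near_right0P (R : realType) (Q : R -> Prop) :
  (\forall t \near 0^'+, Q t) <-> exists d : R, 0 < d /\ forall t, 0 < t -> t < d -> Q t.
Proof.
split=> [/nbhs_ballP[d d0 Hd]|[d [d0 Hd]]].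
  exists d; split=> // t t0 td.
  by apply: Hd => //; rewrite /ball /= sub0r normrN gtr0_norm.
apply/nbhs_ballP; exists d => // t; rewrite /ball /= sub0r normrN => td t0.
by apply: Hd; rewrite // -(gtr0_norm t0).
Qed.

Lemma le0_forall_gt0 (R : realFieldType) (x : R) : (forall e, 0 < e -> x <= e) -> x <= 0.
Proof.
move=> H; rewrite leNgt; apply/negP => x0.
by have := H (x / 2); lra.
Qed.

Section ComplexExponential.
Variable R : realType.
Local Notation normc := (@Normc.normc R).

Definition cexp (u v : R) : R[i] := Complex (expR u * cos v) (expR u * sin v).

Lemma cexpD u v u' v' : cexp u v * cexp u' v' = cexp (u + u') (v + v').
Proof.
rewrite /cexp; apply/eqP; rewrite eq_complex /= expRD cosD sinD.
by apply/andP; split; apply/eqP; ring.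
Qed.

Lemma cexp0 : cexp 0 0 = 1.
Proof. by rewrite /cexp expR0 cos0 sin0 mulr1 mulr0. Qed.

Lemma normc_cexp u v : normc (cexp u v) = expR u.
Proof.
rewrite /cexp /Normc.normc !exprMn -mulrDr cos2Dsin2 mulr1 sqrtr_sqr.
by rewrite ger0_norm // ltW // expR_gt0.
Qed.

Lemma normc_real (r : R) : normc r%:C%C = `|r|.
Proof. by rewrite /Normc.normc /= expr0n /= addr0 sqrtr_sqr. Qed.

Lemma normc_ge0 (z : R[i]) : 0 <= normc z.
Proof. by case: z => x y; rewrite /Normc.normc sqrtr_ge0. Qed.

Lemma normc_le_ReIm (x y : R) : normc (Complex x y) <= `|x| + `|y|.
Proof.
rewrite /Normc.normc -(ger0_norm (addr_ge0 (normr_ge0 x) (normr_ge0 y))).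
rewrite -sqrtr_sqr ler_wsqrtr // sqrrD !real_normK ?num_real //.
have : 0 <= `|x| * `|y| *+ 2 by rewrite mulrn_wge0 // mulr_ge0.
lra.
Qed.

Lemma near_quotient_right0 (g : R -> R) (L : R) : is_derive (0 : R) (1 : R) g L ->
  forall e, 0 < e -> \forall t \near 0^'+, `|(g t - g 0) / t - L| < e.
Proof.
move=> [Hg <-] e e0; apply/near_right0P.
move: Hg => /cvgrPdist_lt /(_ e e0).
rewrite near_withinE /= => /nbhs_ballP[d d0 Hd].
exists d; split=> // t t0 td.
have := Hd t; rewrite /ball /= sub0r normrN gtr0_norm // => /(_ td).
rewrite gt_eqF //= distrC addr0 mulrC => /(_ isT).
by rewrite /GRing.scale /= mulr1.
Qed.

Lemma is_derive_mulr (b x : R) : is_derive x (1 : R) (fun t : R => b * t) b.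
Proof.
by have := @is_deriveZ R R R id b x 1 1 (is_derive_id _ _); rewrite /GRing.scale /= mulr1.
Qed.

Lemma is_derive_cexp_Re (b c : R) :
  is_derive (0 : R) (1 : R) (fun t : R => expR (b * t) * cos (c * t)) b.
Proof.
have he := is_derive1_comp (is_derive_expR (b * 0)) (is_derive_mulr b 0).
have hc := is_derive1_comp (is_derive_cos (c * 0)) (is_derive_mulr c 0).
have := is_deriveM he hc.
by rewrite /= !mulr0 expR0 cos0 sin0 oppr0 mul0r scaler0 add0r scale1r mul1r.
Qed.

Lemma is_derive_cexp_Im (b c : R) :
  is_derive (0 : R) (1 : R) (fun t : R => expR (b * t) * sin (c * t)) c.
Proof.
have he := is_derive1_comp (is_derive_expR (b * 0)) (is_derive_mulr b 0).
have hs := is_derive1_comp (is_derive_sin (c * 0)) (is_derive_mulr c 0).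
have := is_deriveM he hs.
by rewrite /= !mulr0 expR0 cos0 sin0 scale0r addr0 scale1r mul1r.
Qed.

Lemma near_cexp_quotient (b c e : R) : 0 < e -> \forall t \near 0^'+,
  normc ((t^-1)%:C%C * (cexp (b * t) (c * t) - 1) - Complex b c) < e.
Proof.
move=> e0; have e2 : 0 < e / 2 by lra.
have hRe := near_quotient_right0 (is_derive_cexp_Re b c) e2.
have hIm := near_quotient_right0 (is_derive_cexp_Im b c) e2.
rewrite !mulr0 expR0 cos0 mulr1 in hRe.
rewrite !mulr0 expR0 sin0 mulr0 in hIm.
apply: filterS2 hRe hIm => t hRe; rewrite oppr0 addr0 => hIm.
apply: le_lt_trans (normc_le_ReIm _ _) _.
rewrite /cexp /= !mul0r !subr0 !addr0 ![t^-1 * _]mulrC.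
lra.
Qed.

Lemma near_cexp_right0 (b c e : R) : 0 < e -> \forall t \near 0^'+,
  normc (cexp (b * t) (c * t) - 1) < e.
Proof.
move=> e0; set L := normc (Complex b c).
have L0 : 0 <= L := normc_ge0 _.
have eL : 0 < e / (L + 1) by apply: divr_gt0; lra.
have small : \forall t \near 0^'+, 0 < t < e / (L + 1).
  by apply/near_right0P; exists (e / (L + 1)); split=> // t -> ->.
apply: filterS2 small (near_cexp_quotient b c ltr01) => t /andP[t0 te].
set z := cexp (b * t) (c * t) - 1 => Hz.
have Hq : normc ((t^-1)%:C%C * z) <= L + 1.
  have := le_normcD ((t^-1)%:C%C * z - Complex b c) (Complex b c).
  by rewrite subrK -/L; lra.
have -> : z = t%:C%C * ((t^-1)%:C%C * z).
  by rewrite mulrA -rmorphM /= mulfV ?gt_eqF // rmorph1 mul1r.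
rewrite Normc.normcM normc_real gtr0_norm //.
move: te; rewrite ltr_pdivlMr; last lra.
have := normc_ge0 ((t^-1)%:C%C * z).
nra.
Qed.

End ComplexExponential.

Section Seminorm.
Variables (R : realType) (X : lmodType R[i]) (q : X -> R).
Hypothesis hq : seminorm q.
Local Notation normc := (@Normc.normc R).

Lemma seminorm_ge0 x : 0 <= q x.
Proof. by case: hq. Qed.

Lemma seminormD x y : q (x + y) <= q x + q y.
Proof. by case: hq => _ []. Qed.

Lemma seminormZ a x : q (a *: x) = normc a * q x.
Proof. by case: hq => _ []. Qed.

Lemma seminormZr (r : R) x : q (r%:C%C *: x) = `|r| * q x.
Proof. by rewrite seminormZ normc_real. Qed.

Lemma seminorm0 : q 0 = 0.
Proof. by rewrite -(scale0r 0) seminormZ Normc.normc0 mul0r. Qed.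

Lemma seminormN x : q (- x) = q x.
Proof. by rewrite -scaleN1r seminormZ normcN Normc.normc1 mul1r. Qed.

Lemma seminormB x y : q (x - y) = q (y - x).
Proof. by rewrite -seminormN opprB. Qed.

Lemma seminorm_le_sub x y : q x <= q y + q (x - y).
Proof. by rewrite -{1}(addrNK y x) addrC seminormD. Qed.

Lemma seminorm_sum (I : Type) (r : seq I) (F : I -> X) :
  q (\sum_(i <- r) F i) <= \sum_(i <- r) q (F i).
Proof.
elim: r => [|i r IH]; first by rewrite !big_nil seminorm0.
by rewrite !big_cons; apply: le_trans (seminormD _ _) _; exact: lerD.
Qed.

End Seminorm.

Section LinearOperator.
Variables (R : realType) (X : lmodType R[i]) (S : X -> X).
Hypothesis hS : linear_op S.

Lemma linear_op0 : S 0 = 0.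
Proof.
have := hS 1 0 0; rewrite scale1r addr0 => /eqP.
by rewrite -subr_eq0 opprD addrA scale1r subrr sub0r oppr_eq0 => /eqP.
Qed.

Lemma linear_opD x y : S (x + y) = S x + S y.
Proof. by have := hS 1 x y; rewrite !scale1r. Qed.

Lemma linear_opZ a x : S (a *: x) = a *: S x.
Proof. by have := hS a x 0; rewrite !addr0 linear_op0 addr0. Qed.

Lemma linear_opB x y : S (x - y) = S x - S y.
Proof. by rewrite linear_opD -scaleN1r linear_opZ scaleN1r. Qed.

Lemma linear_op_sum (I : Type) (r : seq I) (F : I -> X) :
  S (\sum_(i <- r) F i) = \sum_(i <- r) S (F i).
Proof.
elim: r => [|i r IH]; first by rewrite !big_nil linear_op0.
by rewrite !big_cons linear_opD IH.
Qed.

End LinearOperator.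

(** * Convergence in a Fréchet space *)

Section FrechetConvergence.
Variables (R : realType) (X : lmodType R[i]) (P : nat -> X -> R).
Hypothesis HP : frechet P.
Local Notation normc := (@Normc.normc R).

Lemma frechet_seminorm n : seminorm (P n).
Proof. by case: HP => H _; exact: H. Qed.

Lemma frechet_sep x : (forall n, P n x = 0) -> x = 0.
Proof. by case: HP => _ [H _]; exact: H. Qed.

Lemma cseminorm_seminorm q : cseminorm P q -> seminorm q.
Proof. by case. Qed.

Lemma cseminorm_P n : cseminorm P (P n).
Proof.
split; first exact: frechet_seminorm.
exists n.+1, 1; split=> // x; rewrite mul1r big_ord_recr /= lerDr.
by apply: sumr_ge0 => i _; exact: seminorm_ge0 (frechet_seminorm i) _.
Qed.

Section AlongFilter.
Context {I : Type} (F : set_system I) {FF : ProperFilter F}.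

Definition pcvg (u : I -> X) (y : X) :=
  forall n e, 0 < e -> \forall i \near F, P n (u i - y) < e.

Definition ccvg (c : I -> R[i]) (c0 : R[i]) :=
  forall e, 0 < e -> \forall i \near F, normc (c i - c0) < e.

Lemma pcvg_unique u y1 y2 : pcvg u y1 -> pcvg u y2 -> y1 = y2.
Proof.
move=> H1 H2; apply/eqP; rewrite -subr_eq0; apply/eqP; apply: frechet_sep => n.
have hn := frechet_seminorm n.
apply/eqP; rewrite eq_le seminorm_ge0 // andbT; apply: le0_forall_gt0 => e e0.
have e2 : 0 < e / 2 by lra.
have [i [h1 h2]] := filter_ex (filterI (H1 n _ e2) (H2 n _ e2)).
have -> : y1 - y2 = (y1 - u i) + (u i - y2) by rewrite addrA subrK.
by apply: le_trans (seminormD hn _ _) _; rewrite (seminormB hn y1); lra.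
Qed.

Lemma pcvg_cseminorm q u y : cseminorm P q -> pcvg u y ->
  forall e, 0 < e -> \forall i \near F, q (u i - y) < e.
Proof.
move=> [hq [m [C [C0 HC]]]] Hu.
have Hsum m' e : 0 < e -> \forall i \near F, \sum_(j < m') P j (u i - y) < e.
  elim: m' e => [|k IH] e e0.
    by apply: filterE => i; rewrite big_ord0.
  have e2 : 0 < e / 2 by lra.
  apply: filterS2 (IH _ e2) (Hu k _ e2) => i h1 h2.
  by rewrite big_ord_recr /=; lra.
move=> e e0; have eC : 0 < e / (C + 1) by apply: divr_gt0 => //; lra.
apply: filterS (Hsum m _ eC) => i hi; apply: le_lt_trans (HC _) _.
have : C * \sum_(j < m) P j (u i - y) <= C * (e / (C + 1)).
  by apply: ler_wpM2l => //; exact: ltW.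
have : C * (e / (C + 1)) < e by rewrite mulrA ltr_pdivrMr; nra.
lra.
Qed.

Lemma pcvg_le q u y (B : R) : cseminorm P q -> pcvg u y ->
  (forall eta, 0 < eta -> \forall i \near F, q (u i) <= B + eta) -> q y <= B.
Proof.
move=> hq Hu HB; have hs := cseminorm_seminorm hq.
rewrite -subr_le0; apply: le0_forall_gt0 => e e0.
have e2 : 0 < e / 2 by lra.
have [i [h1 h2]] :=
  filter_ex (filterI (HB _ e2) (pcvg_cseminorm hq Hu e2)).
by have := seminorm_le_sub hs y (u i); rewrite seminormB //; lra.
Qed.

Lemma pcvg_op S u y : LX P S -> pcvg u y -> pcvg (fun i => S (u i)) (S y).
Proof.
move=> [hl hc] Hu n e e0.
by apply: filterS (pcvg_cseminorm (hc _ (cseminorm_P n)) Hu e0) => i /=; rewrite linear_opB.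
Qed.

Lemma pcvg_cst y : pcvg (fun _ => y) y.
Proof. by move=> n e e0; apply: filterE => i; rewrite subrr (seminorm0 (frechet_seminorm n)). Qed.

Lemma pcvgD u v y z : pcvg u y -> pcvg v z -> pcvg (fun i => u i + v i) (y + z).
Proof.
move=> Hu Hv n e e0; have e2 : 0 < e / 2 by lra.
apply: filterS2 (Hu n _ e2) (Hv n _ e2) => i h1 h2.
rewrite opprD addrACA; apply: le_lt_trans (seminormD (frechet_seminorm n) _ _) _.
lra.
Qed.

Lemma pcvgN u y : pcvg u y -> pcvg (fun i => - u i) (- y).
Proof.
move=> Hu n e e0; apply: filterS (Hu n e e0) => i.
by rewrite -opprD (seminormN (frechet_seminorm n)).
Qed.

Lemma pcvgB u v y z : pcvg u y -> pcvg v z -> pcvg (fun i => u i - v i) (y - z).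
Proof. by move=> Hu Hv; apply: pcvgD Hu (pcvgN Hv). Qed.

Lemma pcvg_near_eq u v y : (\forall i \near F, u i = v i) -> pcvg u y -> pcvg v y.
Proof. by move=> Huv Hu n e e0; apply: filterS2 Huv (Hu n e e0) => i ->. Qed.

Lemma ccvg_cst c : ccvg (fun _ => c) c.
Proof. by move=> e e0; apply: filterE => i; rewrite subrr Normc.normc0. Qed.

Lemma pcvgZ c c0 u y : ccvg c c0 -> pcvg u y -> pcvg (fun i => c i *: u i) (c0 *: y).
Proof.
move=> Hc Hu n e e0; have hp := frechet_seminorm n.
set py := P n y; have py0 : 0 <= py := seminorm_ge0 hp y.
have c00 : 0 <= normc c0 := normc_ge0 c0.
have e1 : 0 < e / 2 / (normc c0 + 1) by apply: divr_gt0; lra.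
have e2 : 0 < Num.min 1 (e / 2 / (py + 1)) by rewrite lt_min ltr01 /=; apply: divr_gt0; lra.
apply: filterS2 (Hc _ e2) (Hu n _ e1) => i; rewrite lt_min => /andP[h1 h1'] h2.
have -> : c i *: u i - c0 *: y = c i *: (u i - y) + (c i - c0) *: y.
  by rewrite scalerBr scalerBl addrA subrK.
apply: le_lt_trans (seminormD hp _ _) _; rewrite !(seminormZ hp).
have hci : normc (c i) <= normc c0 + 1.
  by have := le_normcD (c i - c0) c0; rewrite subrK; lra.
have hu0 := seminorm_ge0 hp (u i - y).
have t1 : normc (c i) * P n (u i - y) <= (normc c0 + 1) * P n (u i - y) by apply: ler_wpM2r.
have t1' : (normc c0 + 1) * P n (u i - y) < e / 2 by rewrite mulrC -ltr_pdivlMr; last lra.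
have t2 : normc (c i - c0) * py <= e / 2 / (py + 1) * py by apply: ler_wpM2r => //; exact: ltW.
have t2' : e / 2 / (py + 1) * py <= e / 2.
  by rewrite mulrAC ler_pdivrMr; [nra | lra].
rewrite -/py; lra.
Qed.

End AlongFilter.

Lemma pcvg_right0P (f : R -> X) (y : X) : pcvg 0^'+ f y <-> lim_right0 P f y.
Proof.
by split=> H n e /(H n)/near_right0P.
Qed.

End FrechetConvergence.

(** * Dyadic meshes and exponential sums *)

Section DyadicMesh.
Context {R : realType}.

Definition mesh (k : nat) : R := ((2 ^ k)%:R)^-1.

Lemma mesh_gt0 k : 0 < mesh k.
Proof. by rewrite /mesh invr_gt0 ltr0n expn_gt0. Qed.

Lemma mesh_le1 k : mesh k <= 1.
Proof. by rewrite /mesh invr_le1 ?ler1n ?ltr0n ?expn_gt0 // unitfE pnatr_eq0 -lt0n expn_gt0. Qed.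

Lemma mesh_node_ge0 j k : 0 <= j%:R * mesh k.
Proof. by rewrite mulr_ge0 // ltW // mesh_gt0. Qed.

Lemma natrX2_mesh k m : (k <= m)%N -> (2 ^ (m - k))%:R * mesh m = mesh k.
Proof.
move=> km; rewrite /mesh -{2}(subnKC km) expnD natrM invfM mulrCA.
by rewrite mulfV ?mulr1 // pnatr_eq0 -lt0n expn_gt0.
Qed.

Lemma natrM2_mesh j m : (j * 2 ^ m)%:R * mesh m = j%:R.
Proof. by rewrite natrM -mulrA /mesh mulfV ?mulr1 // pnatr_eq0 -lt0n expn_gt0. Qed.

Lemma near_mesh_lt d : 0 < d -> \forall k \near \oo, mesh k < d.
Proof.
move=> d0; apply: filterS (nbhs_infty_gtr d^-1) => k kd.
rewrite /mesh -[d]invrK ltf_pV2 ?posrE ?invr_gt0 ?ltr0n ?expn_gt0 //.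
by apply: lt_le_trans kd _; rewrite ler_nat ltnW // ltn_expl.
Qed.

Lemma exists_dyadic_between (t d : R) : 0 <= t -> 0 < d ->
  exists k M, t < M%:R * mesh k < t + d.
Proof.
move=> t0 d0; have [k _ /(_ k (leqnn k)) /= hk] := near_mesh_lt d0.
set x := t * (2 ^ k)%:R.
have x0 : 0 <= x by rewrite mulr_ge0 // ler0n.
have tx : t = x * mesh k by rewrite /x /mesh -mulrA mulfV ?mulr1 // pnatr_eq0 -lt0n expn_gt0.
have hk0 := mesh_gt0 k.
exists k, (Num.truncn x).+1; apply/andP; split.
  by rewrite tx ltr_pM2r // truncnS_gt.
have : (Num.truncn x)%:R * mesh k <= x * mesh k by rewrite ler_pM2r // truncn_le.
by rewrite -natr1 mulrDl mul1r tx; lra.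
Qed.

End DyadicMesh.

Section ExponentialSums.
Variables (R : realType) (a : R).
Hypothesis a_gt0 : 0 < a.

Lemma near_expR_decay (M eps : R) : 0 < eps ->
  \forall k \near \oo, expR (- a * k%:R) * M < eps.
Proof.
move=> e0; apply: filterS (nbhs_infty_gtr (`|M| / (eps * a))) => k.
have ea : 0 < eps * a by apply: mulr_gt0.
rewrite ltr_pdivrMr // => Hk.
have F1 := expR_ge1Dx (a * k%:R).
have F2 : expR (- a * k%:R) * expR (a * k%:R) = 1 by rewrite -expRD mulNr addNr expR0.
have F3 := expR_gt0 (- a * k%:R).
have : `|M| < eps * expR (a * k%:R) by have := ler0n R k; nra.
rewrite -(ltr_pM2l F3) mulrCA F2 mulr1.
by have := ler_norm M; nra.
Qed.

Lemma mesh_le_expR (h : R) : 0 < h -> h <= 1 -> h * (a * expR (- a)) <= 1 - expR (- a * h).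
Proof.
move=> h0 h1; have a0 := a_gt0; set r := expR (- a * h).
have r0 : 0 < r by exact: expR_gt0.
have Hr : r * (a * h) <= 1 - r.
  have : r * (1 + a * h) <= r * expR (a * h) by rewrite ler_pM2l // expR_ge1Dx.
  by rewrite [r * expR _]mulrC /r -expRD mulNr subrr expR0; lra.
have ra : expR (- a) <= r by rewrite /r ler_expR; nra.
have ah : 0 <= a * h by nra.
nra.
Qed.

Lemma sum_expR_mesh_le (h c : R) n : 0 < h -> h <= 1 ->
  \sum_(0 <= j < n) h * expR (- a * (c + j%:R * h)) <= expR (- a * c) * (expR a / a).
Proof.
move=> h0 h1; have a0 := a_gt0; set r := expR (- a * h).
have r0 : 0 < r by exact: expR_gt0.
have r1 : r < 1 by rewrite /r -expR0 ltr_expR; nra.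
have -> : \sum_(0 <= j < n) h * expR (- a * (c + j%:R * h)) =
          h * expR (- a * c) * series (geometric 1 r) n.
  have -> : series (geometric 1 r) n = \sum_(0 <= j < n) r ^+ j.
    by rewrite -{2}(add0n n) geometric_partial_tail expr0.
  rewrite mulr_sumr; apply: eq_bigr => j _.
  by rewrite /r -expRM_natl -mulrA -expRD; congr (_ * expR _); ring.
have Hg : series (geometric 1 r) n <= 1 / (1 - r).
  by apply: geometric_le_lim => //; rewrite gtr0_norm.
have hc := expR_gt0 (- a * c).
apply: le_trans (ler_wpM2l (mulr_ge0 (ltW h0) (ltW hc)) Hg) _.
rewrite mulrAC [X in _ <= X]mulrC ler_pM2r // mul1r ler_pdivrMr ?subr_gt0 //.
rewrite mulrAC ler_pdivlMr //.
have := mesh_le_expR h0 h1; rewrite -/r => H.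
have ea := expR_gt0 a.
have : expR a * (h * (a * expR (- a))) <= expR a * (1 - r) by rewrite ler_pM2l.
have -> : expR a * (h * (a * expR (- a))) = h * a * (expR a * expR (- a)) by ring.
by rewrite -expRD subrr expR0 mulr1.
Qed.

End ExponentialSums.

Lemma sum_blocks (V : zmodType) (F : nat -> V) (a b : nat) :
  \sum_(0 <= l < a * b) F l = \sum_(0 <= j < a) \sum_(0 <= i < b) F (j * b + i)%N.
Proof.
elim: a => [|a IH]; first by rewrite mul0n !big_geq.
rewrite mulSnr (@big_cat_nat _ _ _ (a * b)) ?leq_addr // IH big_nat_recr //=.
congr (_ + _).
by rewrite -{1}[(a * b)%N]add0n big_addn addKn; apply: eq_bigr => i _; rewrite addnC.
Qed.

Lemma sum_shift (V : zmodType) (F : nat -> V) (N M : nat) :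
  \sum_(N <= j < N + M) F j = \sum_(0 <= j < M) F (j + N)%N.
Proof. by rewrite -{1}[N]add0n big_addn addKn. Qed.

(** * The resolvent as a limit of Riemann sums *)

Section Resolvent.
Variables (R : realType) (X : lmodType R[i]) (P : nat -> X -> R).
Hypothesis HP : frechet P.
Variable T : R -> X -> X.
Hypothesis HT : C0_semigroup P T.
Variable w : R.
Hypothesis Hw : exp_equicont_of_order P T w.
Variable lam : R[i].
Hypothesis Hlam : w < complex.Re lam.

Lemma semigroup_LX t : 0 <= t -> LX P (T t).
Proof. by case: HT => H _; exact: H. Qed.

Lemma semigroup_linear t : 0 <= t -> linear_op (T t).
Proof. by move=> /semigroup_LX []. Qed.

Lemma semigroup0 x : T 0 x = x.
Proof. by case: HT => _ [H _]; exact: H. Qed.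

Lemma semigroupD t s x : 0 <= t -> 0 <= s -> T (t + s) x = T t (T s x).
Proof. by move=> t0 s0; case: HT => _ [_ [H _]]; exact: H. Qed.

Lemma pcvg_semigroup_right t x : 0 <= t -> pcvg P 0^'+ (fun r => T (t + r) x) (T t x).
Proof.
case: HT => _ [_ [_ Hc]] t0 n e e0; have [d [d0 Hd]] := Hc x t t0 n e e0.
apply/near_right0P; exists d; split=> // r r0 rd.
by apply: Hd; [lra | rewrite addrAC subrr add0r gtr0_norm].
Qed.

Definition growth_dominated (q p : X -> R) (C : R) :=
  forall t x, 0 <= t -> q (T t x) <= C * expR (w * t) * p x.

Lemma exists_growth_dominated q : cseminorm P q ->
  exists p, cseminorm P p /\ exists C, 0 <= C /\ growth_dominated q p C.
Proof.
move=> hq; have [p [hp [C [C0 HC]]]] := Hw hq.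
exists p; split=> //; exists C; split=> // t x t0.
have := HC (exist _ t t0) x; rewrite /rescaled /= (seminormZr (cseminorm_seminorm hq)).
rewrite ger0_norm; last exact/ltW/expR_gt0.
have e0 := expR_gt0 (w * t).
rewrite -(ler_pM2l e0) mulrA -expRD mulNr subrr expR0 mul1r.
by rewrite mulrCA mulrA.
Qed.

Definition gap := complex.Re lam - w.

Lemma gap_gt0 : 0 < gap.
Proof. by rewrite subr_gt0. Qed.

Definition Kgap := expR gap / gap.

Lemma Kgap_gt0 : 0 < Kgap.
Proof. by rewrite divr_gt0 ?expR_gt0 ?gap_gt0. Qed.

Definition expNlam (t : R) : R[i] := cexp (- complex.Re lam * t) (- complex.Im lam * t).

Lemma expNlamD s t : expNlam (s + t) = expNlam s * expNlam t.
Proof. by rewrite /expNlam cexpD !mulrDr. Qed.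

Lemma expNlam0 : expNlam 0 = 1.
Proof. by rewrite /expNlam !mulr0 cexp0. Qed.

Lemma ccvg_expNlam : ccvg 0^'+ expNlam 1.
Proof. by move=> e; exact: near_cexp_right0. Qed.

Definition dorbit y t := expNlam t *: T t y.

Lemma dorbit0 y : dorbit y 0 = y.
Proof. by rewrite /dorbit expNlam0 scale1r semigroup0. Qed.

Lemma dorbitD y s r : 0 <= s -> 0 <= r -> dorbit y (s + r) = expNlam s *: T s (dorbit y r).
Proof.
move=> s0 r0.
by rewrite /dorbit expNlamD semigroupD // (linear_opZ (semigroup_linear s0)) scalerA.
Qed.

Lemma pcvg_dorbit_shift t x : 0 <= t ->
  pcvg P 0^'+ (fun r => expNlam r *: T (t + r) x) (T t x).
Proof.
move=> t0; rewrite -[X in pcvg _ _ _ X]scale1r.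
by apply: (pcvgZ HP ccvg_expNlam); exact: pcvg_semigroup_right.
Qed.

Lemma dorbit_right0 y : pcvg P 0^'+ (dorbit y) y.
Proof.
rewrite -[y in pcvg _ _ _ y]semigroup0.
apply: pcvg_near_eq (pcvg_dorbit_shift y (lexx 0)).
by apply: filterE => r; rewrite add0r.
Qed.

Lemma exists_dorbit_close q y e : cseminorm P q -> 0 < e ->
  exists d : R, 0 < d /\ forall s, 0 <= s -> s < d -> q (dorbit y s - y) <= e.
Proof.
move=> hq e0; have /near_right0P[d [d0 Hd]] : \forall s \near 0^'+, q (dorbit y s - y) < e.
  by apply: (pcvg_cseminorm hq (dorbit_right0 y)).
exists d; split=> // s; rewrite le_eqVlt => /orP[/eqP <- _|s0 sd].
  by rewrite dorbit0 subrr (seminorm0 (cseminorm_seminorm hq)) ltW.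
exact/ltW/Hd.
Qed.

Lemma seminorm_dorbit_le q p C t v : growth_dominated q p C -> seminorm q -> 0 <= t ->
  q (dorbit v t) <= C * expR (- gap * t) * p v.
Proof.
move=> Hb hq t0; rewrite (seminormZ hq) /expNlam normc_cexp.
apply: le_trans (ler_wpM2l (ltW (expR_gt0 _)) (Hb t v t0)) _.
have -> : - gap * t = - complex.Re lam * t + w * t by rewrite /gap; ring.
by rewrite expRD le_eqVlt; apply/orP; left; apply/eqP; ring.
Qed.

Lemma dorbitD_sub y s r : 0 <= s -> 0 <= r ->
  dorbit y (s + r) - dorbit y s = expNlam s *: T s (dorbit y r - y).
Proof.
by move=> s0 r0; rewrite dorbitD // (linear_opB (semigroup_linear s0)) scalerBr.
Qed.

(** Riemann sum of [∫_0^k e^{-λt} T(t) y dt] on the grid of mesh [2^-k]. *)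
Definition riemann k y := \sum_(0 <= j < k * 2 ^ k) (mesh k)%:C%C *: dorbit y (j%:R * mesh k).

Lemma riemann_refine y k m : (k <= m)%N ->
  riemann m y - riemann k y =
    \sum_(0 <= j < k * 2 ^ k) \sum_(0 <= i < 2 ^ (m - k)) (mesh m)%:C%C *:
      (expNlam (j%:R * mesh k) *: T (j%:R * mesh k) (dorbit y (i%:R * mesh m) - y))
    + \sum_(k * 2 ^ m <= l < k * 2 ^ m + (m - k) * 2 ^ m) (mesh m)%:C%C *: dorbit y (l%:R * mesh m).
Proof.
move=> km; set b := (2 ^ (m - k))%N.
have kb : (k * 2 ^ k * b = k * 2 ^ m)%N by rewrite /b -mulnA -expnD subnKC.
have Nm : (m * 2 ^ m = k * 2 ^ k * b + (m - k) * 2 ^ m)%N.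
  by rewrite kb -mulnDl subnKC.
have -> : riemann k y = \sum_(0 <= j < k * 2 ^ k) \sum_(0 <= i < b)
    (mesh m)%:C%C *: dorbit y (j%:R * mesh k).
  apply: eq_bigr => j _; rewrite sumr_const_nat subn0 scalerMnl; congr (_ *: _).
  by rewrite -rmorphMn /= -mulr_natl /b natrX2_mesh.
rewrite /riemann Nm (@big_cat_nat _ _ _ (k * 2 ^ k * b)) ?leq_addr //= sum_blocks kb.
rewrite addrAC -sumrB; congr (_ + _); apply: eq_bigr => j _.
rewrite -sumrB; apply: eq_bigr => i _.
by rewrite -scalerBr natrD mulrDl natrM -mulrA natrX2_mesh // dorbitD_sub // mesh_node_ge0.
Qed.

Section Estimates.
Variables (q p : X -> R) (C : R).
Hypotheses (Hqp : growth_dominated q p C) (hq : seminorm q) (hp : seminorm p) (C0 : 0 <= C).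

Lemma seminorm_rsum_le y (h : R) N M : 0 < h -> h <= 1 ->
  q (\sum_(N <= j < N + M) h%:C%C *: dorbit y (j%:R * h))
    <= C * Kgap * expR (- gap * (N%:R * h)) * p y.
Proof.
move=> h0 h1; apply: le_trans (seminorm_sum hq _ _) _.
have py0 := seminorm_ge0 hp y.
apply: (@le_trans _ _ (\sum_(N <= j < N + M) h * (C * expR (- gap * (j%:R * h)) * p y))).
  apply: ler_sum => j _; rewrite (seminormZr hq) ger0_norm; last exact: ltW.
  rewrite ler_pM2l // seminorm_dorbit_le //.
  by rewrite mulr_ge0 // ltW.
rewrite sum_shift.
have -> : \sum_(0 <= j < M) h * (C * expR (- gap * ((j + N)%N%:R * h)) * p y) =
    C * p y * \sum_(0 <= j < M) h * expR (- gap * (N%:R * h + j%:R * h)).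
  rewrite mulr_sumr; apply: eq_bigr => j _; rewrite natrD mulrDl [_ + N%:R * h]addrC.
  by ring.
have Cp : 0 <= C * p y by apply: mulr_ge0.
apply: le_trans (ler_wpM2l Cp (sum_expR_mesh_le gap_gt0 _ M h0 h1)) _.
by rewrite /Kgap le_eqVlt; apply/orP; left; apply/eqP; ring.
Qed.

Lemma riemann_le y k : q (riemann k y) <= C * Kgap * p y.
Proof.
have := @seminorm_rsum_le y (mesh k) 0 (k * 2 ^ k) (mesh_gt0 k) (mesh_le1 k).
by rewrite mul0r mulr0 expR0 mulr1.
Qed.

Lemma riemann_cauchy_le y k m (eta : R) : (k <= m)%N ->
  (forall r, 0 <= r -> r < mesh k -> p (dorbit y r - y) <= eta) ->
  q (riemann m y - riemann k y) <= C * Kgap * eta + C * Kgap * expR (- gap * k%:R) * p y.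
Proof.
move=> km Heta.
have eta0 : 0 <= eta.
  by have := Heta 0 (lexx _) (mesh_gt0 k); have := seminorm_ge0 hp (dorbit y 0 - y); lra.
have hm := @mesh_gt0 R m; have hk := @mesh_gt0 R k.
rewrite riemann_refine //; apply: le_trans (seminormD hq _ _) _; apply: lerD; last first.
  have := @seminorm_rsum_le y (mesh m) (k * 2 ^ m) ((m - k) * 2 ^ m) hm (mesh_le1 m).
  by rewrite natrM2_mesh.
apply: le_trans (seminorm_sum hq _ _) _.
apply: (@le_trans _ _
    (\sum_(0 <= j < k * 2 ^ k) mesh k * (C * expR (- gap * (j%:R * mesh k)) * eta))).
  apply: ler_sum => j _; apply: le_trans (seminorm_sum hq _ _) _.
  apply: (@le_trans _ _
      (\sum_(0 <= i < 2 ^ (m - k)) mesh m * (C * expR (- gap * (j%:R * mesh k)) * eta))).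
    apply: ler_sum_nat => i /andP[_ ib].
    rewrite (seminormZr hq) ger0_norm ?ler_pM2l //; last exact: ltW.
    apply: le_trans (seminorm_dorbit_le _ Hqp hq (mesh_node_ge0 _ _)) _.
    rewrite ler_wpM2l ?mulr_ge0 ?expR_ge0 // Heta ?mesh_node_ge0 //.
    by rewrite -(natrX2_mesh km) ltr_pM2r // ltr_nat.
  by rewrite sumr_const_nat subn0 -mulrnAl -[mesh m *+ _]mulr_natl natrX2_mesh.
have -> : \sum_(0 <= j < k * 2 ^ k) mesh k * (C * expR (- gap * (j%:R * mesh k)) * eta) =
    C * eta * \sum_(0 <= j < k * 2 ^ k) mesh k * expR (- gap * (0 + j%:R * mesh k)).
  by rewrite mulr_sumr; apply: eq_bigr => j _; rewrite add0r; ring.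
have Ce : 0 <= C * eta by apply: mulr_ge0.
apply: le_trans (ler_wpM2l Ce (sum_expR_mesh_le gap_gt0 _ _ hk (mesh_le1 k))) _.
by rewrite mulr0 expR0 mul1r /Kgap le_eqVlt; apply/orP; left; apply/eqP; ring.
Qed.

End Estimates.

Lemma riemann_cauchy y n e : 0 < e -> exists N, forall k l, (N <= k)%N -> (N <= l)%N ->
  P n (riemann k y - riemann l y) < e.
Proof.
move=> e0; have hPn := frechet_seminorm HP n.
have [p [hp [C [C0 Hqp]]]] := exists_growth_dominated (cseminorm_P HP n).
have hps := cseminorm_seminorm hp.
have CK0 : 0 <= C * Kgap by rewrite mulr_ge0 // ltW // Kgap_gt0.
have e2 : 0 < e / 2 by lra.
set eta := e / 2 / (C * Kgap + 1).
have eta0 : 0 < eta by apply: divr_gt0; lra.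
have Ceta : C * Kgap * eta < e / 2.
  have f1 : C * Kgap / (C * Kgap + 1) < 1 by rewrite ltr_pdivrMr; lra.
  have -> : C * Kgap * eta = e / 2 * (C * Kgap / (C * Kgap + 1)) by rewrite /eta; ring.
  nra.
have [d [d0 Hd]] := exists_dorbit_close y hp eta0.
have /near_inftyP[N HN] : \forall k \near \oo,
    mesh k < d /\ expR (- gap * k%:R) * (C * Kgap * p y) < e / 2.
  exact: filterI (near_mesh_lt d0) (near_expR_decay gap_gt0 _ e2).
have ordered k l : (N <= k)%N -> (k <= l)%N -> P n (riemann l y - riemann k y) < e.
  move=> Nk kl; have [hk hexp] := HN k Nk.
  have Heta r : 0 <= r -> r < mesh k -> p (dorbit y r - y) <= eta.
    by move=> r0 rk; apply: Hd => //; exact: lt_trans rk hk.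
  have := riemann_cauchy_le Hqp hPn hps C0 kl Heta.
  have : C * Kgap * expR (- gap * k%:R) * p y = expR (- gap * k%:R) * (C * Kgap * p y).
    by ring.
  lra.
exists N => k l Nk Nl; case: (leqP k l) => kl; last exact/ordered/ltnW.
by rewrite (seminormB hPn); exact: ordered.
Qed.

Lemma exists_riemann_lim y : exists z, pcvg P \oo (fun k => riemann k y) z.
Proof.
case: HP => _ [_ /(_ (fun k => riemann k y) (fun n e => riemann_cauchy y n (e := e)))] [z Hz].
by exists z => n e e0; apply/near_inftyP; exact: Hz.
Qed.

Definition res y := projT1 (cid (exists_riemann_lim y)).

Lemma res_lim y : pcvg P \oo (fun k => riemann k y) (res y).
Proof. exact: projT2 (cid (exists_riemann_lim y)). Qed.

Lemma riemann_linear k c x y : riemann k (c *: x + y) = c *: riemann k x + riemann k y.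
Proof.
rewrite /riemann scaler_sumr -big_split /=; apply: eq_bigr => j _.
have Hj := semigroup_linear (mesh_node_ge0 j k).
rewrite /dorbit (linear_opD Hj) (linear_opZ Hj) !scalerDr !scalerA.
by congr (_ *: _ + _); ring.
Qed.

Lemma res_linear : linear_op res.
Proof.
move=> c x y; apply: (pcvg_unique HP (res_lim (c *: x + y))).
apply: pcvg_near_eq (pcvgD HP (pcvgZ HP (ccvg_cst c) (res_lim x)) (res_lim y)).
by apply: filterE => k; rewrite riemann_linear.
Qed.

Lemma res_le q p C y : cseminorm P q -> growth_dominated q p C -> seminorm p -> 0 <= C ->
  q (res y) <= C * Kgap * p y.
Proof.
move=> hq Hqp hp C0; apply: (pcvg_le hq (res_lim y)) => eta eta0.
apply: filterE => k.
by have := riemann_le Hqp (cseminorm_seminorm hq) hp C0 y k; lra.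
Qed.

Lemma res_LX : LX P res.
Proof.
split; first exact: res_linear.
move=> q hq; have hs := cseminorm_seminorm hq.
have [p [[hp [m [C' [C'0 HC']]]] [C [C0 Hqp]]]] := exists_growth_dominated hq.
have CK0 : 0 <= C * Kgap by rewrite mulr_ge0 // ltW // Kgap_gt0.
split.
  split=> [x|]; first exact: seminorm_ge0 hs _.
  split=> [x y|c x]; first by rewrite (linear_opD res_linear) seminormD.
  by rewrite (linear_opZ res_linear) (seminormZ hs).
exists m, (C * Kgap * C'); split=> [|x]; first exact: mulr_ge0.
apply: le_trans (res_le x hq Hqp hp C0) _.
by rewrite -[X in _ <= X]mulrA; apply: ler_wpM2l.
Qed.

Lemma riemann_semigroup k t x : 0 <= t -> riemann k (T t x) = T t (riemann k x).
Proof.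
move=> t0; have Ht := semigroup_linear t0.
rewrite /riemann (linear_op_sum Ht); apply: eq_bigr => j _.
rewrite (linear_opZ Ht) /dorbit (linear_opZ Ht); congr (_ *: (_ *: _)).
by rewrite -!semigroupD ?mesh_node_ge0 // addrC.
Qed.

Lemma res_semigroup t x : 0 <= t -> res (T t x) = T t (res x).
Proof.
move=> t0; apply: (pcvg_unique HP (res_lim (T t x))).
apply: pcvg_near_eq (pcvg_op HP (semigroup_LX t0) (res_lim x)).
by apply: filterE => k; rewrite riemann_semigroup.
Qed.

Lemma expNlam_semigroup_riemann k M y :
  expNlam (M%:R * mesh k) *: T (M%:R * mesh k) (riemann k y) =
    \sum_(M <= j < M + k * 2 ^ k) (mesh k)%:C%C *: dorbit y (j%:R * mesh k).
Proof.
have Ht := semigroup_linear (mesh_node_ge0 M k).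
rewrite sum_shift /riemann (linear_op_sum Ht) scaler_sumr; apply: eq_bigr => j _.
rewrite (linear_opZ Ht) scalerA mulrC -scalerA natrD mulrDl addrC.
by rewrite dorbitD ?mesh_node_ge0.
Qed.

Lemma riemann_defect k M y :
  expNlam (M%:R * mesh k) *: T (M%:R * mesh k) (riemann k y) - riemann k y
    + (M%:R * mesh k)%:C%C *: y =
  \sum_(k * 2 ^ k <= j < k * 2 ^ k + M) (mesh k)%:C%C *: dorbit y (j%:R * mesh k)
    - \sum_(0 <= j < M) (mesh k)%:C%C *: (dorbit y (j%:R * mesh k) - y).
Proof.
set g := fun j : nat => (mesh k)%:C%C *: dorbit y (j%:R * mesh k).
have whole : \sum_(0 <= j < M) g j + \sum_(M <= j < M + k * 2 ^ k) g j =
    riemann k y + \sum_(k * 2 ^ k <= j < k * 2 ^ k + M) g j.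
  by rewrite -!big_cat_nat ?leq_addr // addnC.
have ty : (M%:R * mesh k)%:C%C *: y = \sum_(0 <= j < M) (mesh k)%:C%C *: y.
  by rewrite sumr_const_nat subn0 scalerMnl -rmorphMn mulr_natl.
have split_y : \sum_(0 <= j < M) (mesh k)%:C%C *: (dorbit y (j%:R * mesh k) - y) =
    \sum_(0 <= j < M) g j - \sum_(0 <= j < M) (mesh k)%:C%C *: y.
  by rewrite -sumrB; apply: eq_bigr => j _; rewrite scalerBr.
rewrite expNlam_semigroup_riemann ty split_y opprB addrCA [_ - _ + _]addrC.
congr (_ + _); move: whole.
set S1 := \sum_(0 <= j < M) g j; set S2 := \sum_(M <= j < _) g j.
set S3 := \sum_(_ <= j < _ + M) g j => whole.
by rewrite -[S2](addKr S1) whole [riemann k y + S3]addrC addrA addrK addrC.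
Qed.

(** [(e^{-λt} T(t) - 1) R y = - t y + defect y t], and [defect y t = o(t)]. *)
Definition defect y t := expNlam t *: T t (res y) - res y + t%:C%C *: y.

Lemma dyadic_defect_le y n (eps : R) k0 M : 0 <= eps ->
  (forall s, 0 <= s -> s < M%:R * mesh k0 -> P n (dorbit y s - y) <= eps) ->
  P n (defect y (M%:R * mesh k0)) <= eps * (M%:R * mesh k0).
Proof.
move=> eps0 Heps; set t := M%:R * mesh k0.
have t0 : 0 <= t := mesh_node_ge0 M k0.
have hPn := frechet_seminorm HP n.
have [p [hp [C [C0 Hqp]]]] := exists_growth_dominated (cseminorm_P HP n).
have hps := cseminorm_seminorm hp.
apply: (pcvg_le (cseminorm_P HP n) (pcvgD HP (pcvgB HP (pcvgZ HP (ccvg_cst _)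
  (pcvg_op HP (semigroup_LX t0) (res_lim y))) (res_lim y)) (pcvg_cst HP _))) => eta eta0.
apply: filterS2 (nbhs_infty_ge k0) (near_expR_decay gap_gt0 (C * Kgap * p y) eta0).
move=> k kk0 hk /=.
have tE : t = (M * 2 ^ (k - k0))%:R * mesh k by rewrite natrM -mulrA natrX2_mesh.
rewrite tE riemann_defect; apply: le_trans (seminormD hPn _ _) _.
rewrite (seminormN hPn) -tE.
have tail := seminorm_rsum_le Hqp hPn hps C0 y (k * 2 ^ k) (M * 2 ^ (k - k0))
  (mesh_gt0 k) (mesh_le1 k).
rewrite natrM2_mesh in tail.
have head : P n (\sum_(0 <= j < M * 2 ^ (k - k0))
    (mesh k)%:C%C *: (dorbit y (j%:R * mesh k) - y)) <= eps * t.
  apply: le_trans (seminorm_sum hPn _ _) _.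
  apply: (@le_trans _ _ (\sum_(0 <= j < M * 2 ^ (k - k0)) mesh k * eps)).
    apply: ler_sum_nat => j /andP[_ jM].
    rewrite (seminormZr hPn) ger0_norm ?ler_pM2l ?mesh_gt0 ?Heps ?mesh_node_ge0 //.
      by rewrite -/t tE ltr_pM2r ?mesh_gt0 // ltr_nat.
    exact/ltW/mesh_gt0.
  by rewrite sumr_const_nat subn0 -mulr_natl tE [mesh k * eps]mulrC mulrCA.
have : C * Kgap * expR (- gap * k%:R) * p y = expR (- gap * k%:R) * (C * Kgap * p y) by ring.
lra.
Qed.

Lemma pcvg_defect_right y t : 0 <= t -> pcvg P 0^'+ (fun r => defect y (t + r)) (defect y t).
Proof.
move=> t0; set z := res y.
have ccvg_shift : ccvg 0^'+ (fun r => (t + r)%:C%C) t%:C%C.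
  move=> e e0; apply/near_right0P; exists e; split=> // r r0 re.
  have -> : ((t + r)%:C - t%:C)%C = r%:C%C :> R[i].
    by apply/eqP; rewrite eq_complex /= subrr eqxx andbT; apply/eqP; ring.
  by rewrite normc_real gtr0_norm.
apply: pcvg_near_eq (pcvgD HP (pcvgB HP (pcvgZ HP (ccvg_cst (expNlam t))
  (pcvg_dorbit_shift z t0)) (pcvg_cst HP z)) (pcvgZ HP ccvg_shift (pcvg_cst HP y))).
by apply: filterE => r; rewrite /defect expNlamD scalerA.
Qed.

Lemma defect_le y n (eps d t : R) : 0 < eps ->
  (forall s, 0 <= s -> s < d -> P n (dorbit y s - y) <= eps) ->
  0 < t -> t < d -> P n (defect y t) <= eps * t.
Proof.
move=> eps0 Hd t0 td; have hPn := frechet_seminorm HP n.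
(* Approach [t] from the right by dyadic times, where [dyadic_defect_le] applies. *)
rewrite -subr_le0; apply: le0_forall_gt0 => e e0.
set eta := e / (eps + 1).
have eta0 : 0 < eta by apply: divr_gt0; lra.
have /near_right0P[d1 [d10 Hd1]] : \forall r \near 0^'+, P n (defect y (t + r) - defect y t) < eta.
  by apply: (pcvg_defect_right y (ltW t0) n).
have dd : 0 < Num.min d1 (Num.min (d - t) eta) by rewrite !lt_min d10 eta0 subr_gt0 td.
have [k [M /andP[h1 h2]]] := exists_dyadic_between (ltW t0) dd.
set del := Num.min d1 (Num.min (d - t) eta) in h2.
have m1 : del <= d1 by rewrite /del ge_min lexx.
have m2 : del <= d - t by rewrite /del !ge_min lexx ?orbT.
have m3 : del <= eta by rewrite /del !ge_min lexx ?orbT.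
set t1 := M%:R * mesh k in h1 h2 *.
have Ht1 : P n (defect y t1) <= eps * t1.
  apply: dyadic_defect_le; first exact: ltW.
  by move=> s s0; rewrite -/t1 => st1; apply: Hd => //; lra.
have Hr : P n (defect y t1 - defect y t) < eta.
  by have := Hd1 (t1 - t); rewrite addrCA subrr addr0; apply; lra.
have := seminorm_le_sub hPn (defect y t) (defect y t1); rewrite (seminormB hPn) => Htri.
have : eps * t1 <= eps * (t + eta) by apply: ler_wpM2l; lra.
have : eps * eta + eta = e.
  have -> : eps * eta + eta = (eps + 1) * eta by ring.
  by rewrite /eta mulrCA mulfV ?mulr1 // gt_eqF //; lra.
lra.
Qed.

Lemma pcvg_quotient_res y :
  pcvg P 0^'+ (fun t => (t^-1)%:C%C *: (expNlam t *: T t (res y) - res y)) (- y).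
Proof.
move=> n e e0; have hPn := frechet_seminorm HP n.
have e2 : 0 < e / 2 by lra.
have [d [d0 Hd]] := exists_dorbit_close y (cseminorm_P HP n) e2.
apply/near_right0P; exists d; split=> // t t0 td.
have := defect_le e2 Hd t0 td.
have -> : (t^-1)%:C%C *: (expNlam t *: T t (res y) - res y) - - y = (t^-1)%:C%C *: defect y t.
  by rewrite /defect opprK [in RHS]scalerDr scalerA -rmorphM /= mulVf ?gt_eqF // scale1r.
rewrite (seminormZr hPn) gtr0_norm ?invr_gt0 // => H.
have : t^-1 * P n (defect y t) <= t^-1 * (e / 2 * t) by rewrite ler_pM2l ?invr_gt0.
by rewrite mulrCA mulVf ?gt_eqF // mulr1; lra.
Qed.

Definition explam (t : R) : R[i] := cexp (complex.Re lam * t) (complex.Im lam * t).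

Lemma explam_expNlam t : explam t * expNlam t = 1.
Proof. by rewrite /explam /expNlam cexpD !mulNr !subrr cexp0. Qed.

Lemma ccvg_explam : ccvg 0^'+ explam 1.
Proof. by move=> e; exact: near_cexp_right0. Qed.

Lemma ccvg_explam_quotient : ccvg 0^'+ (fun t => (t^-1)%:C%C * (explam t - 1)) lam.
Proof.
have -> : lam = Complex (complex.Re lam) (complex.Im lam) by case: lam.
by move=> e; exact: near_cexp_quotient.
Qed.

Lemma pcvg_generator_res y :
  pcvg P 0^'+ (fun t => (t^-1)%:C%C *: (T t (res y) - res y)) (lam *: res y - y).
Proof.
set z := res y; have -> : lam *: z - y = 1 *: - y + lam *: z by rewrite scale1r addrC.
apply: pcvg_near_eq (pcvgD HP (pcvgZ HP ccvg_explam (pcvg_quotient_res y))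
  (pcvgZ HP ccvg_explam_quotient (pcvg_cst HP z))).
apply: filterE => t; rewrite -/z.
rewrite [explam t *: _]scalerA mulrC -scalerA -scalerA -scalerDr; congr (_ *: _).
by rewrite scalerBr scalerA explam_expNlam scale1r scalerBl scale1r addrA subrK.
Qed.

Variables (D : set X) (A : X -> X).
Hypothesis HG : generator P T D A.

Lemma generator_pcvg x : D x -> pcvg P 0^'+ (fun t => (t^-1)%:C%C *: (T t x - x)) (A x).
Proof. by move=> Dx; apply/pcvg_right0P; case: HG => _; exact. Qed.

Lemma res_right_inverse y : D (res y) /\ A (res y) = lam *: res y - y.
Proof.
have Dz : D (res y).
  by case: HG => -> _; exists (lam *: res y - y); apply/pcvg_right0P/pcvg_generator_res.
by split=> //; apply: (pcvg_unique HP (generator_pcvg Dz)); exact: pcvg_generator_res.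
Qed.

Lemma res_left_inverse x : D x -> res (lam *: x - A x) = x.
Proof.
move=> Dx; have [DRx ARx] := res_right_inverse x.
have resA : res (A x) = A (res x).
  apply: (pcvg_unique HP (pcvg_op HP res_LX (generator_pcvg Dx))).
  apply: pcvg_near_eq (generator_pcvg DRx).
  apply/near_right0P; exists 1; split=> // t t0 _.
  by rewrite (linear_opZ res_linear) (linear_opB res_linear) res_semigroup // ltW.
by rewrite (linear_opB res_linear) (linear_opZ res_linear) resA ARx opprB addrC subrK.
Qed.

Section OrbitSup.
Variable q : X -> R.
Hypothesis hq : cseminorm P q.

(** [K⁻¹ R] does not increase [orbit_sup] ([orbit_sup_res]), which bounds the
    powers of [K⁻¹ R]. *)
Definition orbit_sup v := sup [set q (rescaled T w i v) | i in [set: {t : R | 0 <= t}]].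

Let origin : {t : R | 0 <= t} := exist _ 0 (lexx 0).

Lemma has_sup_orbit v : has_sup [set q (rescaled T w i v) | i in [set: {t : R | 0 <= t}]].
Proof.
have [p [hp [C [C0 HC]]]] := Hw hq.
split; first by exists (q (rescaled T w origin v)), origin.
by exists (C * p v) => _ [i _ <-]; exact: HC.
Qed.

Lemma orbit_sup_bounded :
  exists p C, cseminorm P p /\ 0 <= C /\ forall v, orbit_sup v <= C * p v.
Proof.
have [p [hp [C [C0 HC]]]] := Hw hq.
exists p, C; split=> //; split=> // v.
apply: ge_sup; first by exists (q (rescaled T w origin v)), origin.
by move=> _ [i _ <-]; exact: HC.
Qed.

Lemma le_orbit_sup v s : 0 <= s -> expR (- w * s) * q (T s v) <= orbit_sup v.
Proof.
move=> s0; rewrite -[X in X * _]ger0_norm ?(ltW (expR_gt0 _)) //.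
rewrite -(seminormZr (cseminorm_seminorm hq)).
by apply: (sup_upper_bound (has_sup_orbit v)); exists (exist _ s s0).
Qed.

Lemma le_orbit_sup0 v : q v <= orbit_sup v.
Proof. by have := le_orbit_sup v (lexx 0); rewrite mulr0 expR0 mul1r semigroup0. Qed.

Lemma riemann_orbit_le v t k : 0 <= t ->
  expR (- w * t) * q (T t (riemann k v)) <= Kgap * orbit_sup v.
Proof.
move=> t0; have hs := cseminorm_seminorm hq; have Ht := semigroup_linear t0.
have e0 := expR_gt0 (- w * t).
apply: (@le_trans _ _
    (\sum_(0 <= j < k * 2 ^ k) mesh k * expR (- gap * (0 + j%:R * mesh k)) * orbit_sup v)).
  rewrite /riemann (linear_op_sum Ht).
  apply: le_trans (ler_wpM2l (ltW e0) (seminorm_sum hs _ _)) _.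
  rewrite mulr_sumr; apply: ler_sum => j _.
  set s := j%:R * mesh k; have s0 : 0 <= s := mesh_node_ge0 j k.
  rewrite (linear_opZ Ht) /dorbit (linear_opZ Ht) -semigroupD // !(seminormZ hs).
  rewrite normc_real normc_cexp gtr0_norm ?mesh_gt0 // add0r.
  have hE : expR (- w * t) * expR (- complex.Re lam * s) =
      expR (- gap * s) * expR (- w * (t + s)) by rewrite -!expRD /gap; congr expR; ring.
  rewrite mulrCA [expR (- w * t) * _]mulrA hE -!mulrA.
  by rewrite !ler_pM2l ?mesh_gt0 ?expR_gt0 // le_orbit_sup // addr_ge0.
rewrite -mulr_suml ler_wpM2r //.
  exact: le_trans (seminorm_ge0 (cseminorm_seminorm hq) v) (le_orbit_sup0 v).
have := sum_expR_mesh_le gap_gt0 0 (k * 2 ^ k) (mesh_gt0 k) (mesh_le1 k).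
by rewrite mulr0 expR0 mul1r.
Qed.

Lemma orbit_sup_res v : orbit_sup ((Kgap^-1)%:C%C *: res v) <= orbit_sup v.
Proof.
have hs := cseminorm_seminorm hq; have K0 := Kgap_gt0.
apply: ge_sup; first by exists (q (rescaled T w origin ((Kgap^-1)%:C%C *: res v))), origin.
move=> _ [[t t0] _ <-]; rewrite /rescaled /=.
rewrite (linear_opZ (semigroup_linear t0)) scalerA mulrC -scalerA (seminormZr hs).
rewrite ger0_norm ?invr_ge0 ?(ltW K0) // (ler_pdivrMl _ _ K0).
apply: (pcvg_le hq (pcvgZ HP (ccvg_cst _) (pcvg_op HP (semigroup_LX t0) (res_lim v)))).
move=> eta eta0; apply: filterE => k.
rewrite (seminormZr hs) ger0_norm ?(ltW (expR_gt0 _)) //.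
by have := riemann_orbit_le v k t0; lra.
Qed.

End OrbitSup.

Lemma res_LX0 : LX0 P res.
Proof.
split; first exact: res_LX.
have K0 := Kgap_gt0.
exists (Kgap^-1)%:C%C; split.
  by rewrite eq_complex /= eqxx andbT invr_eq0 gt_eqF.
move=> q hq; have [p [C [hp [C0 HC]]]] := orbit_sup_bounded hq.
exists p; split=> //; exists C; split=> // n x.
apply: le_trans (le_orbit_sup0 hq _) _; apply: le_trans _ (HC x).
elim: n => [|n IH] //=.
exact: le_trans (orbit_sup_res hq _) IH.
Qed.

Lemma resolvent_lam : resolvent_C P D A lam.
Proof.
have res_solves y : D (res y) /\ lam *: res y - A (res y) = y.
  have [Dz Az] := res_right_inverse y.
  by rewrite Az opprB addrCA subrr addr0.
split=> [x y Dx Dy H|]; first by rewrite -(res_left_inverse Dx) -(res_left_inverse Dy) H.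
split=> [y|]; first by exists (res y); exact: res_solves.
by exists res; split; [exact: res_solves | exact: res_LX0].
Qed.

End Resolvent.

Unset Implicit Arguments.

Theorem theorem4p1 (R : realType) (X : lmodType R[i]) (P : nat -> X -> R)
  (T : R -> X -> X) (D : set X) (A : X -> X) :
  frechet P ->
  C0_semigroup P T ->
  exp_equicont P T ->
  generator P T D A ->
  ((-oo <= spectral_bound P D A)%E /\
   (spectral_bound P D A <= growth_bound P T)%E /\
   (growth_bound P T < +oo)%E).
Proof.
move=> HP HT [w Hw] HG; split; first exact: leNye.
split; last first.
  apply: (@le_lt_trans _ _ w%:E); last exact: ltry.
  by apply: ereal_inf_lbound; exists w.
apply: ge_ereal_sup => _ [lam Hsp <-].
apply: le_ereal_inf_tmp => _ [w' Hw' <-].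
rewrite lee_fin leNgt; apply/negP => Hlt.
exact: Hsp (resolvent_lam HP HT Hw' Hlt HG).
Qed.
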